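(* Let $a,b,c$ be real numbers with $0<a,b<+\infty$ and $a+b<c<a+b+1$, and let $w\in(0,1)$. Define $$P(a,b,c):=F(a,b,c;1)=\frac{\Gamma(c)\Gamma(c-a-b)}{\Gamma(c-a)\Gamma(c-b)},\qquad Q(a,b,c):=\frac{\Gamma(c)\Gamma(a+b+1-c)}{(c-a-b)\Gamma(a)\Gamma(b)}.$$ Then $$0<P(a,b,c)-1<\frac{P(a,b,c)-F(a,b,c;w)}{(1-w)^{c-a-b}}<Q(a,b,c).$$
   Context: $F(\alpha,\beta,\gamma;w)$ denotes the Gauss hypergeometric function ${}_2F_1$ and $\Gamma$ the Gamma function. *)

From Stdlib Require Import Reals Factorial.
From Coquelicot Require Import Coquelicot.
Open Scope R_scope.

Fixpoint poch (x : R) (n : nat) : R :=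
  match n with
  | O => 1
  | S k => poch x k * (x + INR k)
  end.

(* Euler's Gamma function, as the improper integral
   Gamma(x) = int_0^oo t^(x-1) e^(-t) dt  (meaningful for x > 0,
   which is the only case used). *)
Definition Gamma (x : R) : R :=
  RInt_gen (fun t => Rpower t (x - 1) * exp (- t))
           (at_right 0) (Rbar_locally p_infty).

Definition hyp2F1 (a b c w : R) : R :=
  Series (fun n => poch a n * poch b n / (poch c n * INR (fact n)) * w ^ n).

Definition P_abc (a b c : R) : R :=
  Gamma c * Gamma (c - a - b) / (Gamma (c - a) * Gamma (c - b)).

Definition Q_abc (a b c : R) : R :=
  Gamma c * Gamma (a + b + 1 - c) / ((c - a - b) * Gamma a * Gamma b).

(* Let [A n] be the coefficients of [F(a,b,c;w)] and [alpha n] those of [(1 - w) ^ s],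
   [s = c - a - b] in (0,1): [alpha 0 = 1], [alpha n < 0] for [n >= 1] and [sum alpha = 0].
   Gauss's theorem [sum A = P] follows from the contiguous relation
   [c (c - a - b) F(c) = (c - a) (c - b) F(c + 1)], iterated, and from the asymptotics of
   ratios of Gamma values, which come from the log-convexity of Gamma.  The ratio
   [A (n + 1) / - alpha (n + 1)] increases strictly to [Q], so [A n < - Q alpha n] for
   [n >= 1], and summing [(1 - w ^ n) (- Q alpha n - A n) > 0] gives the upper bound.
   For the lower bound, [E n = A (n + 1) + (P - 1) alpha (n + 1)] sums to 0 and changes sign
   once, from nonpositive to positive; against the decreasing weights [w ^ (n + 1)] this
   gives [sum E n w ^ (n + 1) < 0], i.e. [(P - 1) (1 - w) ^ s < P - F]. *)

From Stdlib Require Import Reals Factorial Lra Lia Classical.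
From Coquelicot Require Import Coquelicot.
Open Scope R_scope.

Lemma ball_R (c e y : R) : ball c e y <-> Rabs (y - c) < e.
Proof. reflexivity. Qed.

Lemma filterlim_incr_bounded (G : R -> R) (a B : R) :
  (forall u v, a <= u <= v -> G u <= G v) -> (forall u, a <= u -> G u <= B) ->
  exists l, filterlim G (Rbar_locally p_infty) (locally l) /\ forall u, a <= u -> G u <= l.
Proof.
  intros Hincr Hbnd.
  set (E := fun y => exists u, a <= u /\ y = G u).
  destruct (completeness E) as [l [Hub Hlub]].
  - exists B. intros y [u [Hu ->]]. now apply Hbnd.
  - exists (G a), a. split; [lra | reflexivity].
  - assert (HGl : forall u, a <= u -> G u <= l) by (intros u Hu; apply Hub; now exists u).
    exists l. split; [| exact HGl].
    apply filterlim_locally. intros eps. pose proof (cond_pos eps).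
    destruct (classic (exists M, a <= M /\ l - eps < G M)) as [[M [HaM HM]] | Hno].
    + exists M. intros u Hu. apply ball_R, Rabs_def1.
      * specialize (HGl u ltac:(lra)). lra.
      * specialize (Hincr M u ltac:(lra)). lra.
    + assert (l <= l - eps); [| lra].
      apply Hlub. intros y [u [Hu ->]].
      apply Rnot_lt_le. intros Hlt. apply Hno. now exists u.
Qed.

Lemma filter_prod_0_p_infty_pos (P : R -> Prop) : (forall t, 0 < t -> P t) ->
  filter_prod (at_right 0) (Rbar_locally p_infty)
    (fun ab => forall t, Rmin (fst ab) (snd ab) <= t -> P t).
Proof.
  intros HP. apply (Filter_prod _ _ _ (fun a => 0 < a) (fun b => 0 < b)).
  - exists (mkposreal 1 Rlt_0_1). now intros.
  - now exists 0.
  - intros a b Ha Hb t Ht. apply HP. eapply Rlt_le_trans; [| exact Ht]. now apply Rmin_glb_lt.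
Qed.

Lemma is_RInt_gen_at_right_0_p_infty (f : R -> R) (l0 l1 : R) :
  (forall a b, 0 < a -> 0 < b -> ex_RInt f a b) ->
  filterlim (fun a => RInt f a 1) (at_right 0) (locally l0) ->
  filterlim (fun b => RInt f 1 b) (Rbar_locally p_infty) (locally l1) ->
  is_RInt_gen f (at_right 0) (Rbar_locally p_infty) (l0 + l1).
Proof.
  intros Hex H0 H1.
  assert (Hpos : filter_prod (at_right 0) (Rbar_locally p_infty)
                   (fun ab => 0 < fst ab /\ 0 < snd ab)).
  { generalize (filter_prod_0_p_infty_pos (fun t => 0 < t) (fun t Ht => Ht)).
    apply filter_imp. intros ab Hab. split; apply Hab; [apply Rmin_l | apply Rmin_r]. }
  apply (filterlimi_lim_ext_loc (fun ab => RInt f (fst ab) (snd ab))).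
  - apply (filter_imp _ _ (fun ab Hab => RInt_correct (V := R_CompleteNormedModule) _ _ _
             (Hex _ _ (proj1 Hab) (proj2 Hab))) Hpos).
  - apply (filterlim_ext_loc (fun ab => RInt f (fst ab) 1 + RInt f 1 (snd ab))).
    + apply (filter_imp _ _ (fun ab Hab => RInt_Chasles (V := R_CompleteNormedModule) _ _ _ _
               (Hex _ _ (proj1 Hab) Rlt_0_1) (Hex _ _ Rlt_0_1 (proj2 Hab))) Hpos).
    + apply (filterlim_comp_2 (G := locally l0) (H := locally l1)
               (fun ab => RInt f (fst ab) 1) (fun ab => RInt f 1 (snd ab)) Rplus).
      * exact (filterlim_comp _ _ _ _ _ _ _ _ filterlim_fst H0).
      * exact (filterlim_comp _ _ _ _ _ _ _ _ filterlim_snd H1).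
      * apply (filterlim_plus l0 l1).
Qed.

Lemma exp_le x y : x <= y -> exp x <= exp y.
Proof. intros [H | ->]; [left; now apply exp_increasing | now right]. Qed.

Definition Gamma_integrand (x t : R) : R := Rpower t (x - 1) * exp (- t).

Lemma Gamma_integrand_exp x t : Gamma_integrand x t = exp ((x - 1) * ln t - t).
Proof. unfold Gamma_integrand, Rpower. rewrite <- exp_plus. f_equal; ring. Qed.

Lemma Gamma_integrand_pos x t : 0 < Gamma_integrand x t.
Proof. rewrite Gamma_integrand_exp. apply exp_pos. Qed.

Lemma continuous_Gamma_integrand x t : 0 < t -> continuous (Gamma_integrand x) t.
Proof.
  intros Ht. apply (ex_derive_continuous (Gamma_integrand x)). unfold Gamma_integrand, Rpower.
  auto_derive. lra.
Qed.

Lemma ex_RInt_Gamma_integrand x a b : 0 < a -> 0 < b -> ex_RInt (Gamma_integrand x) a b.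
Proof.
  intros Ha Hb. apply (ex_RInt_continuous (V := R_CompleteNormedModule)).
  intros t [Ht _]. apply continuous_Gamma_integrand.
  eapply Rlt_le_trans; [| exact Ht]. now apply Rmin_glb_lt.
Qed.

Lemma RInt_Gamma_integrand_0_1 x e : 0 < x -> 0 < e <= 1 ->
  RInt (Gamma_integrand x) e 1 <= 1 / x.
Proof.
  intros Hx He.
  assert (HI : is_RInt (fun t => Rpower t (x - 1)) e 1 (Rpower 1 x / x - Rpower e x / x)).
  { apply (is_RInt_derive (fun t => Rpower t x / x)); intros t Ht;
      rewrite Rmin_left in Ht by lra.
    - unfold Rpower. auto_derive; [lra |].
      replace ((x - 1) * ln t) with (x * ln t + - ln t) by ring.
      rewrite exp_plus, exp_Ropp, exp_ln by lra. field. lra.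
    - apply (ex_derive_continuous (fun t => Rpower t (x - 1))). unfold Rpower. auto_derive. lra. }
  apply Rle_trans with (Rpower 1 x / x - Rpower e x / x).
  - apply (is_RInt_le (Gamma_integrand x) (fun t => Rpower t (x - 1)) e 1); [lra | | exact HI |].
    + apply (RInt_correct (V := R_CompleteNormedModule)), ex_RInt_Gamma_integrand; lra.
    + intros t Ht. unfold Gamma_integrand.
      rewrite <- (Rmult_1_r (Rpower t (x - 1))) at 2.
      apply Rmult_le_compat_l; [left; apply exp_pos |].
      rewrite <- exp_0. apply exp_le. lra.
  - unfold Rpower at 1. rewrite ln_1, Rmult_0_r, exp_0.
    assert (0 < Rpower e x / x) by (apply Rdiv_lt_0_compat; [apply exp_pos | lra]).
    unfold Rdiv in *. lra.
Qed.

Lemma Gamma_integrand_le_exp_half x t : 0 < x -> 1 <= t ->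
  Gamma_integrand x t <= exp (x * ln (2 * x)) * exp (- t / 2).
Proof.
  intros Hx Ht. rewrite Gamma_integrand_exp, <- exp_plus. apply exp_le.
  assert (Hln0 : 0 <= ln t) by (rewrite <- ln_1; apply ln_le; lra).
  assert (Hln : ln t - ln (2 * x) <= t / (2 * x) - 1).
  { rewrite <- ln_div by lra.
    pose proof (exp_ineq1_le (ln (t / (2 * x)))) as H.
    rewrite exp_ln in H by (apply Rdiv_lt_0_compat; lra). lra. }
  assert (Hx' : x * (ln t - ln (2 * x)) <= x * (t / (2 * x) - 1))
    by (apply Rmult_le_compat_l; lra).
  replace (x * (t / (2 * x) - 1)) with (t / 2 - x) in Hx' by (field; lra).
  nra.
Qed.

Lemma RInt_Gamma_integrand_1_infty x M : 0 < x -> 1 <= M ->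
  RInt (Gamma_integrand x) 1 M <= 2 * exp (x * ln (2 * x)).
Proof.
  intros Hx HM. set (C := exp (x * ln (2 * x))).
  assert (HC : 0 < C) by apply exp_pos.
  assert (HI : is_RInt (fun t => C * exp (- t / 2)) 1 M
                 (- 2 * C * exp (- M / 2) - - 2 * C * exp (- 1 / 2))).
  { apply (is_RInt_derive (fun t => - 2 * C * exp (- t / 2))); intros t _.
    - auto_derive; [easy | unfold Rdiv; field].
    - apply (ex_derive_continuous (fun t => C * exp (- t / 2))). auto_derive. easy. }
  apply Rle_trans with (- 2 * C * exp (- M / 2) - - 2 * C * exp (- 1 / 2)).
  - apply (is_RInt_le (Gamma_integrand x) (fun t => C * exp (- t / 2)) 1 M); [easy | | exact HI |].
    + apply (RInt_correct (V := R_CompleteNormedModule)), ex_RInt_Gamma_integrand; lra.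
    + intros t Ht. apply Gamma_integrand_le_exp_half; lra.
  - assert (0 < exp (- M / 2)) by apply exp_pos.
    assert (exp (- 1 / 2) <= 1) by (rewrite <- exp_0; apply exp_le; lra).
    nra.
Qed.

Lemma Gamma_correct_pos x : 0 < x ->
  is_RInt_gen (Gamma_integrand x) (at_right 0) (Rbar_locally p_infty) (Gamma x) /\ 0 < Gamma x.
Proof.
  intros Hx. set (f := Gamma_integrand x).
  assert (Hex : forall a b, 0 < a -> 0 < b -> ex_RInt f a b)
    by (intros; now apply ex_RInt_Gamma_integrand).
  assert (Hge : forall a b, 0 < a <= b -> 0 <= RInt f a b).
  { intros a b Hab. apply RInt_ge_0; [lra | apply Hex; lra |].
    intros; left; apply Gamma_integrand_pos. }
  assert (Hsplit : forall a b c, 0 < a -> 0 < b -> 0 < c -> RInt f a b + RInt f b c = RInt f a c)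
    by (intros; apply (RInt_Chasles (V := R_CompleteNormedModule)); now apply Hex).
  destruct (filterlim_incr_bounded (fun b => RInt f 1 b) 1 (2 * exp (x * ln (2 * x))))
    as [l1 [H1 Hl1]].
  { intros u v Huv. rewrite <- (Hsplit 1 u v) by lra.
    pose proof (Hge u v ltac:(lra)). lra. }
  { intros u Hu. now apply RInt_Gamma_integrand_1_infty. }
  destruct (filterlim_incr_bounded (fun u => RInt f (/ u) 1) 1 (1 / x)) as [l0 [H0 Hl0]].
  { intros u v Huv.
    assert (0 < / v <= / u) by (split; [apply Rinv_0_lt_compat | apply Rinv_le_contravar]; lra).
    rewrite <- (Hsplit (/ v) (/ u) 1) by lra.
    pose proof (Hge (/ v) (/ u) ltac:(lra)). lra. }
  { intros u Hu. apply RInt_Gamma_integrand_0_1; [easy |].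
    split; [apply Rinv_0_lt_compat; lra | rewrite <- Rinv_1; apply Rinv_le_contravar; lra]. }
  assert (H0' : filterlim (fun a => RInt f a 1) (at_right 0) (locally l0)).
  { apply (filterlim_ext_loc (fun a => RInt f (/ / a) 1)).
    - exists (mkposreal 1 Rlt_0_1). intros a _ Ha. now rewrite Rinv_inv.
    - exact (filterlim_comp _ _ _ _ _ _ _ _ filterlim_Rinv_0_right H0). }
  assert (HG := is_RInt_gen_at_right_0_p_infty f l0 l1 Hex H0' H1).
  replace (Gamma x) with (l0 + l1)
    by (symmetry; exact (is_RInt_gen_unique (V := R_CompleteNormedModule) _ _ HG)).
  split; [exact HG |].
  assert (0 <= l0) by (apply Rle_trans with (RInt f (/ 1) 1); [apply Hge | apply Hl0]; lra).
  assert (0 < l1); [| lra].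
  apply Rlt_le_trans with (RInt f 1 2); [| apply Hl1; lra].
  apply RInt_gt_0; [lra | intros; apply Gamma_integrand_pos |].
  intros t Ht. apply continuous_Gamma_integrand. lra.
Qed.

Lemma is_RInt_gen_Gamma x : 0 < x ->
  is_RInt_gen (Gamma_integrand x) (at_right 0) (Rbar_locally p_infty) (Gamma x).
Proof. intros Hx. now apply Gamma_correct_pos. Qed.

Lemma Gamma_pos x : 0 < x -> 0 < Gamma x.
Proof. intros Hx. now apply Gamma_correct_pos. Qed.

Lemma is_derive_Gamma_integrand x t : 0 < t ->
  is_derive (Gamma_integrand (x + 1)) t (x * Gamma_integrand x t - Gamma_integrand (x + 1) t).
Proof.
  intros Ht. unfold Gamma_integrand, Rpower. auto_derive; [lra |].
  replace (x + 1 - 1) with x by ring.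
  replace ((x - 1) * ln t) with (x * ln t + - ln t) by ring.
  rewrite exp_plus, (exp_Ropp (ln t)), exp_ln by lra. field. lra.
Qed.

Lemma filterlim_Gamma_integrand_0 x : 1 < x ->
  filterlim (Gamma_integrand x) (at_right 0) (locally 0).
Proof.
  intros Hx. apply filterlim_locally. intros eps. pose proof (cond_pos eps) as He.
  assert (Hd : 0 < Rmin 1 (exp (ln eps / (x - 1)))) by (apply Rmin_pos; [lra | apply exp_pos]).
  exists (mkposreal _ Hd). intros t Ht Ht0. apply ball_R. rewrite ball_R in Ht. simpl in Ht.
  rewrite Rminus_0_r in *. rewrite Rabs_right in Ht by lra.
  rewrite Rabs_right by (left; apply Gamma_integrand_pos).
  assert (Hlt : ln t < ln eps / (x - 1)).
  { rewrite <- (ln_exp (ln eps / (x - 1))). apply ln_increasing; [easy |].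
    eapply Rlt_le_trans; [exact Ht | apply Rmin_r]. }
  apply Rmult_lt_compat_l with (r := x - 1) in Hlt; [| lra].
  replace ((x - 1) * (ln eps / (x - 1))) with (ln eps) in Hlt by (field; lra).
  rewrite Gamma_integrand_exp, <- (exp_ln eps) by easy. apply exp_increasing. lra.
Qed.

Lemma filterlim_Gamma_integrand_p_infty x : 0 < x ->
  filterlim (Gamma_integrand x) (Rbar_locally p_infty) (locally 0).
Proof.
  intros Hx. apply filterlim_locally. intros eps. pose proof (cond_pos eps) as He.
  set (C := exp (x * ln (2 * x))). assert (HC : 0 < C) by apply exp_pos.
  exists (Rmax 1 (- 2 * ln (eps / C))). intros t Ht.
  pose proof (Rmax_Rle 1 (- 2 * ln (eps / C)) t) as Hmax.
  apply ball_R. rewrite Rminus_0_r, Rabs_right by (left; apply Gamma_integrand_pos).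
  eapply Rle_lt_trans; [apply Gamma_integrand_le_exp_half; lra |]. fold C.
  assert (Hexp : exp (- t / 2) < eps / C).
  { rewrite <- (exp_ln (eps / C)) by (apply Rdiv_lt_0_compat; lra). apply exp_increasing. lra. }
  apply Rmult_lt_compat_l with (r := C) in Hexp; [| easy].
  replace (C * (eps / C)) with (pos eps) in Hexp by (field; lra). exact Hexp.
Qed.

Lemma continuous_Derive_Gamma_integrand x t : 0 < t ->
  continuous (Derive (Gamma_integrand (x + 1))) t.
Proof.
  intros Ht.
  apply (continuous_ext_loc _ (fun t => x * Gamma_integrand x t - Gamma_integrand (x + 1) t)).
  - assert (Ht2 : 0 < t / 2) by lra. exists (mkposreal _ Ht2). intros y Hy.
    change (Rabs (y - t) < t / 2) in Hy. apply Rabs_def2 in Hy.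
    symmetry. apply is_derive_unique, is_derive_Gamma_integrand. lra.
  - apply (ex_derive_continuous (fun t => x * Gamma_integrand x t - Gamma_integrand (x + 1) t)).
    unfold Gamma_integrand, Rpower. auto_derive. lra.
Qed.

Lemma Gamma_succ x : 0 < x -> Gamma (x + 1) = x * Gamma x.
Proof.
  intros Hx. set (g := Gamma_integrand (x + 1)).
  assert (HD : is_RInt_gen (Derive g) (at_right 0) (Rbar_locally p_infty) (0 - 0)).
  { apply is_RInt_gen_Derive.
    - generalize (filter_prod_0_p_infty_pos (ex_derive g)
        (fun t Ht => ex_intro _ _ (is_derive_Gamma_integrand x t Ht))).
      apply filter_imp. intros ab Hab t [Ht _]. now apply Hab.
    - generalize (filter_prod_0_p_infty_pos (continuous (Derive g))
        (continuous_Derive_Gamma_integrand x)).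
      apply filter_imp. intros ab Hab t [Ht _]. now apply Hab.
    - apply filterlim_Gamma_integrand_0. lra.
    - apply filterlim_Gamma_integrand_p_infty. lra. }
  assert (Hg : is_RInt_gen g (at_right 0) (Rbar_locally p_infty)
                 (minus (scal x (Gamma x)) (0 - 0))).
  { eapply is_RInt_gen_ext;
      [| exact (is_RInt_gen_minus _ _ _ _ (is_RInt_gen_scal _ x _ (is_RInt_gen_Gamma x Hx)) HD)].
    generalize (filter_prod_0_p_infty_pos
      (fun t => minus (scal x (Gamma_integrand x t)) (Derive g t) = g t)).
    intros H. apply (filter_imp _ _ (fun ab Hab t Ht => Hab t (Rlt_le _ _ (proj1 Ht)))), H.
    intros t Ht. unfold g. rewrite (is_derive_unique _ _ _ (is_derive_Gamma_integrand x t Ht)).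
    unfold minus, plus, opp, scal; simpl; unfold mult; simpl. ring. }
  change (RInt_gen g (at_right 0) (Rbar_locally p_infty) = x * Gamma x).
  rewrite (is_RInt_gen_unique (V := R_CompleteNormedModule) _ _ Hg).
  unfold minus, plus, opp, scal; simpl; unfold mult; simpl. ring.
Qed.

Lemma exp_convex l A B : 0 <= l <= 1 ->
  exp (l * A + (1 - l) * B) <= l * exp A + (1 - l) * exp B.
Proof.
  intros Hl. set (m := l * A + (1 - l) * B).
  assert (Htangent : forall X, exp m * (1 + (X - m)) <= exp X).
  { intros X. pose proof (exp_ineq1_le (X - m)) as H.
    apply Rmult_le_compat_l with (r := exp m) in H; [| left; apply exp_pos].
    rewrite <- exp_plus in H. now replace (m + (X - m)) with X in H by ring. }
  pose proof (Htangent A). pose proof (Htangent B).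
  assert (l * (exp m * (1 + (A - m))) + (1 - l) * (exp m * (1 + (B - m))) = exp m)
    by (unfold m; ring).
  nra.
Qed.

Lemma Rpower_AM_GM u v l : 0 < u -> 0 < v -> 0 <= l <= 1 ->
  Rpower u l * Rpower v (1 - l) <= l * u + (1 - l) * v.
Proof.
  intros Hu Hv Hl. unfold Rpower. rewrite <- exp_plus.
  pose proof (exp_convex l (ln u) (ln v) Hl) as H.
  rewrite (exp_ln u), (exp_ln v) in H by easy.
  exact H.
Qed.

(* Pointwise form of Hoelder's inequality: weighted AM-GM on the integrands normalised by
   [I] and [J] (which will be [Gamma x] and [Gamma y]). *)
Lemma Gamma_integrand_le_convex x y l I J t : 0 < I -> 0 < J -> 0 <= l <= 1 ->
  Gamma_integrand (l * x + (1 - l) * y) t <=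
  Rpower I l * Rpower J (1 - l) * (l / I * Gamma_integrand x t + (1 - l) / J * Gamma_integrand y t).
Proof.
  intros HI HJ Hl.
  pose proof (Gamma_integrand_pos x t) as Gx. pose proof (Gamma_integrand_pos y t) as Gy.
  pose proof (Rpower_AM_GM (Gamma_integrand x t / I) (Gamma_integrand y t / J) l
                ltac:(now apply Rdiv_lt_0_compat) ltac:(now apply Rdiv_lt_0_compat) Hl) as H.
  replace (l / I * Gamma_integrand x t + (1 - l) / J * Gamma_integrand y t)
    with (l * (Gamma_integrand x t / I) + (1 - l) * (Gamma_integrand y t / J))
    by (unfold Rdiv; ring).
  eapply Rle_trans; [| apply Rmult_le_compat_l; [| exact H]];
    [| left; apply Rmult_lt_0_compat; apply exp_pos].
  right. unfold Rpower. rewrite !ln_div by easy.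
  rewrite !Gamma_integrand_exp, !ln_exp, <- !exp_plus. f_equal. ring.
Qed.

Lemma Gamma_log_convex x y l : 0 < x -> 0 < y -> 0 <= l <= 1 ->
  Gamma (l * x + (1 - l) * y) <= Rpower (Gamma x) l * Rpower (Gamma y) (1 - l).
Proof.
  intros Hx Hy Hl.
  pose proof (Gamma_pos x Hx) as HI. pose proof (Gamma_pos y Hy) as HJ.
  assert (Hz : 0 < l * x + (1 - l) * y) by nra.
  set (K := Rpower (Gamma x) l * Rpower (Gamma y) (1 - l)).
  assert (HK := is_RInt_gen_scal _ K _ (is_RInt_gen_plus _ _ _ _
    (is_RInt_gen_scal _ (l / Gamma x) _ (is_RInt_gen_Gamma x Hx))
    (is_RInt_gen_scal _ ((1 - l) / Gamma y) _ (is_RInt_gen_Gamma y Hy)))).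
  assert (Hle : filter_prod (at_right 0) (Rbar_locally p_infty) (fun ab => fst ab <= snd ab)).
  { apply (Filter_prod _ _ _ (fun a => a < 1) (fun b => 1 < b)).
    - exists (mkposreal 1 Rlt_0_1). intros t Ht _. change (Rabs (t - 0) < 1) in Ht.
      apply Rabs_def2 in Ht. lra.
    - now exists 1.
    - simpl. intros; lra. }
  assert (Hdom : filter_prod (at_right 0) (Rbar_locally p_infty) (fun ab => forall t,
    fst ab <= t <= snd ab -> norm (Gamma_integrand (l * x + (1 - l) * y) t) <=
      scal K (plus (scal (l / Gamma x) (Gamma_integrand x t))
                   (scal ((1 - l) / Gamma y) (Gamma_integrand y t))))).
  { apply filter_forall. intros ab t _. unfold norm, abs, plus, scal; simpl; unfold mult; simpl.
    rewrite Rabs_right by (left; apply Gamma_integrand_pos).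
    now apply Gamma_integrand_le_convex. }
  pose proof (RInt_gen_norm (V := R_CompleteNormedModule) _ _ _ _ Hle Hdom
                (is_RInt_gen_Gamma _ Hz) HK) as Hn.
  unfold norm, abs, plus, scal in Hn; simpl in Hn; unfold mult in Hn; simpl in Hn.
  replace (K * (l / Gamma x * Gamma x + (1 - l) / Gamma y * Gamma y)) with K in Hn
    by (field; lra).
  eapply Rle_trans; [apply Rle_abs | exact Hn].
Qed.

Lemma Gamma_add_nat x n : 0 < x -> Gamma (x + INR n) = poch x n * Gamma x.
Proof.
  intros Hx. induction n as [| n IH].
  - simpl. rewrite Rplus_0_r. ring.
  - rewrite S_INR. replace (x + (INR n + 1)) with (x + INR n + 1) by ring.
    rewrite Gamma_succ, IH by (pose proof (pos_INR n); lra). simpl. ring.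
Qed.

Lemma poch_Gamma x n : 0 < x -> poch x n = Gamma (x + INR n) / Gamma x.
Proof. intros Hx. rewrite Gamma_add_nat by easy. pose proof (Gamma_pos x Hx). field. lra. Qed.

Lemma Rpower_mul_1m a l : 0 < a -> Rpower a l * Rpower a (1 - l) = a.
Proof.
  intros Ha. rewrite <- Rpower_plus. replace (l + (1 - l)) with 1 by ring. now apply Rpower_1.
Qed.

(* Wendel's inequalities, from log-convexity and [Gamma (t + 1) = t Gamma t]. *)
Lemma Gamma_add_le t d : 0 < t -> 0 <= d <= 1 -> Gamma (t + d) <= Rpower t d * Gamma t.
Proof.
  intros Ht Hd. pose proof (Gamma_pos t Ht) as Gt.
  pose proof (Gamma_log_convex t (t + 1) (1 - d) Ht ltac:(lra) ltac:(lra)) as H.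
  replace ((1 - d) * t + (1 - (1 - d)) * (t + 1)) with (t + d) in H by ring.
  replace (1 - (1 - d)) with d in H by ring.
  rewrite Gamma_succ, <- Rpower_mult_distr in H by lra.
  replace (Rpower (Gamma t) (1 - d) * (Rpower t d * Rpower (Gamma t) d))
    with (Rpower t d * (Rpower (Gamma t) d * Rpower (Gamma t) (1 - d))) in H by ring.
  now rewrite Rpower_mul_1m in H.
Qed.

Lemma Gamma_add_ge t d : 0 < t -> 0 <= d <= 1 ->
  t * Rpower t d * Gamma t <= (t + d) * Gamma (t + d).
Proof.
  intros Ht Hd. pose proof (Gamma_pos t Ht) as Gt. pose proof (Gamma_pos (t + d) ltac:(lra)) as Gtd.
  pose proof (Gamma_log_convex (t + d) (t + d + 1) d ltac:(lra) ltac:(lra) Hd) as H.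
  replace (d * (t + d) + (1 - d) * (t + d + 1)) with (t + 1) in H by ring.
  rewrite !Gamma_succ, <- Rpower_mult_distr in H by lra.
  replace (Rpower (Gamma (t + d)) d * (Rpower (t + d) (1 - d) * Rpower (Gamma (t + d)) (1 - d)))
    with (Rpower (t + d) (1 - d) * (Rpower (Gamma (t + d)) d * Rpower (Gamma (t + d)) (1 - d)))
    in H by ring.
  rewrite Rpower_mul_1m in H by easy.
  assert (Hpow : Rpower t d <= Rpower (t + d) d) by (apply Rle_Rpower_l; lra).
  assert (0 < Rpower t d) by apply exp_pos.
  assert (0 < Rpower (t + d) (1 - d)) by apply exp_pos.
  apply Rle_trans with (Rpower t d * (Rpower (t + d) (1 - d) * Gamma (t + d))); [nra |].
  apply Rle_trans with (Rpower (t + d) d * (Rpower (t + d) (1 - d) * Gamma (t + d))).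
  - apply Rmult_le_compat_r; [left; now apply Rmult_lt_0_compat | exact Hpow].
  - rewrite <- Rmult_assoc, Rpower_mul_1m by lra. now right.
Qed.

Lemma is_lim_seq_inv_INR_add q : 0 < q -> is_lim_seq (fun n => / (INR n + q)) 0.
Proof.
  intros Hq. replace (Finite 0) with (Rbar_inv p_infty) by reflexivity.
  apply is_lim_seq_inv; [| discriminate].
  eapply is_lim_seq_plus; [apply is_lim_seq_INR | apply is_lim_seq_const | reflexivity].
Qed.

Lemma is_lim_seq_INR_add_div p q : 0 < q -> is_lim_seq (fun n => (INR n + p) / (INR n + q)) 1.
Proof.
  intros Hq. apply (is_lim_seq_ext (fun n => 1 + (p - q) * / (INR n + q))).
  - intros n. pose proof (pos_INR n). field. lra.
  - replace (Finite 1) with (Finite (1 + (p - q) * 0)) by (f_equal; ring).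
    apply is_lim_seq_plus'; [apply is_lim_seq_const |].
    apply (is_lim_seq_scal_l _ (p - q) 0), is_lim_seq_inv_INR_add, Hq.
Qed.

Lemma is_lim_seq_Gamma_add_div_le_1 d : 0 <= d <= 1 ->
  is_lim_seq (fun n => Gamma (INR n + 1 + d) / (Rpower (INR n + 1) d * Gamma (INR n + 1))) 1.
Proof.
  intros Hd. apply is_lim_seq_le_le with
    (u := fun n => (INR n + 1) / (INR n + (1 + d))) (w := fun _ => 1).
  - intros n. set (t := INR n + 1). assert (Ht : 0 < t) by (pose proof (pos_INR n); unfold t; lra).
    assert (HX : 0 < Rpower t d * Gamma t)
      by (apply Rmult_lt_0_compat; [apply exp_pos | now apply Gamma_pos]).
    pose proof (Gamma_add_ge t d Ht Hd). pose proof (Gamma_add_le t d Ht Hd).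
    replace (INR n + (1 + d)) with (t + d) by (unfold t; ring). split.
    + apply (Rle_div_r _ _ _ HX).
      replace (t / (t + d) * (Rpower t d * Gamma t)) with (t * Rpower t d * Gamma t / (t + d))
        by (field; lra).
      apply Rle_div_l; lra.
    + apply (Rle_div_l _ _ _ HX). lra.
  - apply is_lim_seq_INR_add_div. lra.
  - apply is_lim_seq_const.
Qed.

Lemma is_lim_seq_Gamma_add_div_pred d : 1 <= d ->
  is_lim_seq (fun n => Gamma (INR n + 1 + (d - 1)) /
                       (Rpower (INR n + 1) (d - 1) * Gamma (INR n + 1))) 1 ->
  is_lim_seq (fun n => Gamma (INR n + 1 + d) / (Rpower (INR n + 1) d * Gamma (INR n + 1))) 1.
Proof.
  intros Hd Hpred.
  pose proof (is_lim_seq_mult' _ _ _ _ Hpred (is_lim_seq_INR_add_div d 1 Rlt_0_1)) as H.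
  rewrite Rmult_1_r in H. eapply is_lim_seq_ext; [| exact H]. intros n. simpl.
  set (t := INR n + 1). assert (Ht : 0 < t) by (pose proof (pos_INR n); unfold t; lra).
  replace (t + d) with (t + (d - 1) + 1) by ring.
  replace (INR n + d) with (t + (d - 1)) by (unfold t; ring).
  rewrite Gamma_succ by lra.
  replace (Rpower t d) with (Rpower t (d - 1) * t)
    by (rewrite <- (Rpower_1 t) at 2 by easy; rewrite <- Rpower_plus; f_equal; ring).
  pose proof (Gamma_pos t Ht). assert (0 < Rpower t (d - 1)) by apply exp_pos.
  field. lra.
Qed.

Lemma is_lim_seq_Gamma_add_div d : 0 <= d ->
  is_lim_seq (fun n => Gamma (INR n + 1 + d) / (Rpower (INR n + 1) d * Gamma (INR n + 1))) 1.
Proof.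
  intros Hd. destruct (INR_unbounded d) as [k Hk].
  assert (Hd' : d <= INR k + 1) by lra. clear Hk. revert d Hd Hd'.
  induction k as [| k IH]; intros d Hd Hd'.
  - apply is_lim_seq_Gamma_add_div_le_1. simpl in Hd'. lra.
  - destruct (Rle_dec d 1) as [Hd1 | Hd1]; [now apply is_lim_seq_Gamma_add_div_le_1 |].
    rewrite S_INR in Hd'. apply is_lim_seq_Gamma_add_div_pred; [lra |]. apply IH; lra.
Qed.

Lemma is_lim_seq_Gamma_ratio x y z u : 0 <= x -> 0 <= y -> 0 <= z -> 0 <= u -> x + y = z + u ->
  is_lim_seq (fun n => Gamma (INR n + x) * Gamma (INR n + y) /
                       (Gamma (INR n + z) * Gamma (INR n + u))) 1.
Proof.
  intros Hx Hy Hz Hu Hs. apply is_lim_seq_incr_1.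
  pose proof (is_lim_seq_div' _ _ _ _
    (is_lim_seq_mult' _ _ _ _ (is_lim_seq_Gamma_add_div x Hx) (is_lim_seq_Gamma_add_div y Hy))
    (is_lim_seq_mult' _ _ _ _ (is_lim_seq_Gamma_add_div z Hz) (is_lim_seq_Gamma_add_div u Hu))
    ltac:(lra)) as H.
  replace (1 * 1 / (1 * 1)) with 1 in H by field.
  eapply is_lim_seq_ext; [| exact H]. intros n. rewrite S_INR.
  set (t := INR n + 1). assert (Ht : 0 < t) by (pose proof (pos_INR n); unfold t; lra).
  assert (Hpow : Rpower t x * Rpower t y = Rpower t z * Rpower t u)
    by (rewrite <- !Rpower_plus; now rewrite Hs).
  pose proof (Gamma_pos t Ht).
  pose proof (Gamma_pos (t + x) ltac:(lra)). pose proof (Gamma_pos (t + y) ltac:(lra)).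
  pose proof (Gamma_pos (t + z) ltac:(lra)). pose proof (Gamma_pos (t + u) ltac:(lra)).
  assert (0 < Rpower t x) by apply exp_pos. assert (0 < Rpower t y) by apply exp_pos.
  assert (0 < Rpower t z) by apply exp_pos. assert (0 < Rpower t u) by apply exp_pos.
  replace (Rpower t y) with (Rpower t z * Rpower t u / Rpower t x) by (rewrite <- Hpow; field; lra).
  field. repeat split; lra.
Qed.

Lemma poch_pos x n : 0 < x -> 0 < poch x n.
Proof.
  intros Hx. induction n as [| n IH]; simpl; [lra |].
  apply Rmult_lt_0_compat; [easy |]. pose proof (pos_INR n). lra.
Qed.

Lemma poch_le x y n : 0 < x <= y -> poch x n <= poch y n.
Proof.
  intros Hxy. induction n as [| n IH]; simpl; [lra |].
  pose proof (poch_pos x n ltac:(lra)). pose proof (pos_INR n).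
  apply Rmult_le_compat; lra.
Qed.

Lemma poch_add1 x n : x * poch (x + 1) n = poch x n * (x + INR n).
Proof.
  induction n as [| n IH]; cbn [poch]; [simpl; ring |].
  rewrite <- Rmult_assoc, IH, S_INR. ring.
Qed.

Lemma poch_1 n : poch 1 n = INR (fact n).
Proof.
  induction n as [| n IH]; [reflexivity |].
  cbn [poch]. rewrite IH, fact_simpl, mult_INR, S_INR. ring.
Qed.

Lemma INR_fact_S n : INR (fact (S n)) = (INR n + 1) * INR (fact n).
Proof. now rewrite fact_simpl, mult_INR, S_INR. Qed.

Definition hyp_coef (a b c : R) (n : nat) : R :=
  poch a n * poch b n / (poch c n * INR (fact n)).

(* The coefficient of [w ^ n] in [(1 - w) ^ s]. *)
Definition binom_coef (s : R) (n : nat) : R := poch (- s) n / INR (fact n).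

Lemma hyp_coef_0 a b c : hyp_coef a b c 0 = 1.
Proof. unfold hyp_coef. simpl. field. Qed.

Lemma hyp_coef_pos a b c n : 0 < a -> 0 < b -> 0 < c -> 0 < hyp_coef a b c n.
Proof.
  intros. unfold hyp_coef.
  apply Rdiv_lt_0_compat; apply Rmult_lt_0_compat; apply poch_pos || apply INR_fact_lt_0; easy.
Qed.

Lemma hyp_coef_S a b c n : 0 < c ->
  hyp_coef a b c (S n) = hyp_coef a b c n * ((a + INR n) * (b + INR n)) / ((c + INR n) * (INR n + 1)).
Proof.
  intros Hc. unfold hyp_coef. rewrite INR_fact_S. cbn [poch].
  pose proof (poch_pos c n Hc). pose proof (pos_INR n). pose proof (INR_fact_lt_0 n).
  field. repeat split; lra.
Qed.

Lemma hyp_coef_add1 a b c n : 0 < c ->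
  hyp_coef a b (c + 1) n = hyp_coef a b c n * c / (c + INR n).
Proof.
  intros Hc. unfold hyp_coef. pose proof (poch_add1 c n) as E.
  pose proof (poch_pos c n Hc). pose proof (poch_pos (c + 1) n ltac:(lra)).
  pose proof (pos_INR n). pose proof (INR_fact_lt_0 n).
  replace (poch (c + 1) n) with (poch c n * (c + INR n) / c) by (rewrite <- E; field; lra).
  field. repeat split; lra.
Qed.

Lemma hyp_coef_le a b c c' n : 0 < a -> 0 < b -> 0 < c <= c' -> hyp_coef a b c' n <= hyp_coef a b c n.
Proof.
  intros Ha Hb Hc. unfold hyp_coef, Rdiv.
  pose proof (poch_pos a n Ha). pose proof (poch_pos b n Hb). pose proof (poch_pos c n ltac:(lra)).
  pose proof (INR_fact_lt_0 n). pose proof (poch_le c c' n Hc).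
  apply Rmult_le_compat_l; [left; now apply Rmult_lt_0_compat |].
  apply Rinv_le_contravar; [now apply Rmult_lt_0_compat |]. nra.
Qed.

Lemma binom_coef_0 s : binom_coef s 0 = 1.
Proof. unfold binom_coef. simpl. field. Qed.

Lemma binom_coef_S s n : binom_coef s (S n) = binom_coef s n * (INR n - s) / (INR n + 1).
Proof.
  unfold binom_coef. rewrite INR_fact_S. cbn [poch].
  pose proof (pos_INR n). pose proof (INR_fact_lt_0 n). field. lra.
Qed.

Lemma opp_binom_coef_S s n : - binom_coef s (S n) = s * poch (1 - s) n / INR (fact (S n)).
Proof.
  unfold binom_coef. pose proof (poch_add1 (- s) n) as E. replace (- s + 1) with (1 - s) in E by ring.
  cbn [poch]. rewrite <- E. pose proof (INR_fact_lt_0 (S n)). field. lra.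
Qed.

Lemma binom_coef_S_neg s n : 0 < s < 1 -> binom_coef s (S n) < 0.
Proof.
  intros Hs. pose proof (poch_pos (1 - s) n ltac:(lra)). pose proof (INR_fact_lt_0 (S n)).
  assert (0 < - binom_coef s (S n)); [| lra].
  rewrite opp_binom_coef_S. apply Rdiv_lt_0_compat; [nra | easy].
Qed.

Lemma sum_n_binom_coef s N : sum_n (binom_coef s) N = poch (1 - s) N / INR (fact N).
Proof.
  induction N as [| N IH].
  - rewrite sum_O. unfold binom_coef. simpl. reflexivity.
  - rewrite sum_Sn, IH.
    replace (binom_coef s (S N)) with (- (s * poch (1 - s) N / INR (fact (S N))))
      by (rewrite <- opp_binom_coef_S; ring).
    rewrite !INR_fact_S. change (poch (1 - s) (S N)) with (poch (1 - s) N * (1 - s + INR N)).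
    unfold plus; simpl. pose proof (pos_INR N). pose proof (INR_fact_lt_0 N). field. lra.
Qed.

Lemma is_lim_seq_Rpower_INR_neg c s : 0 < s -> is_lim_seq (fun n => Rpower (INR n + c) (- s)) 0.
Proof.
  intros Hs.
  assert (Hln : is_lim_seq (fun n => ln (INR n + c)) p_infty).
  { apply (filterlim_comp _ _ _ (fun n => INR n + c) ln eventually (Rbar_locally p_infty));
      [| exact is_lim_ln_p].
    eapply is_lim_seq_plus; [apply is_lim_seq_INR | apply is_lim_seq_const | reflexivity]. }
  pose proof (is_lim_seq_scal_l _ (- s) _ Hln) as H.
  assert (E : Rbar_mult (- s) p_infty = m_infty)
    by (simpl; destruct Rle_dec; [exfalso; lra | reflexivity]).
  rewrite E in H. unfold Rpower.
  exact (filterlim_comp _ _ _ (fun n => - s * ln (INR n + c)) exp eventually (Rbar_locally m_infty)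
           _ H is_lim_exp_m).
Qed.

Lemma is_lim_seq_poch_div_fact s : 0 < s < 1 ->
  is_lim_seq (fun N => poch (1 - s) N / INR (fact N)) 0.
Proof.
  intros Hs. set (K := Gamma 1 / Gamma (1 - s)).
  pose proof (Gamma_pos 1 Rlt_0_1) as G1. pose proof (Gamma_pos (1 - s) ltac:(lra)) as Gs.
  apply is_lim_seq_le_le with (u := fun _ => 0)
    (w := fun N => K * ((INR N + 1) / (INR N + (1 - s)) * Rpower (INR N + (1 - s)) (- s))).
  - intros N. pose proof (pos_INR N). split.
    { left. apply Rdiv_lt_0_compat; [apply poch_pos; lra | apply INR_fact_lt_0]. }
    set (t := INR N + (1 - s)). assert (Ht : 0 < t) by (unfold t; lra).
    pose proof (Gamma_pos t Ht) as Gt. pose proof (Gamma_pos (INR N + 1) ltac:(lra)) as GN.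
    assert (Hpt : 0 < Rpower t s) by apply exp_pos.
    assert (E1 : poch (1 - s) N = Gamma t / Gamma (1 - s)).
    { unfold t. rewrite (Rplus_comm (INR N)), Gamma_add_nat by lra. field. lra. }
    assert (E2 : INR (fact N) = Gamma (INR N + 1) / Gamma 1).
    { rewrite (Rplus_comm (INR N)), Gamma_add_nat, poch_1 by lra. field. lra. }
    pose proof (Gamma_add_ge t s Ht ltac:(lra)) as Hw.
    replace (t + s) with (INR N + 1) in Hw by (unfold t; ring).
    rewrite E1, E2, Rpower_Ropp.
    replace (Gamma t / Gamma (1 - s) / (Gamma (INR N + 1) / Gamma 1))
      with (K * (Gamma t / Gamma (INR N + 1))) by (unfold K; field; lra).
    apply Rmult_le_compat_l; [left; now apply Rdiv_lt_0_compat |].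
    apply (Rle_div_l _ _ _ GN).
    replace ((INR N + 1) / t * / Rpower t s * Gamma (INR N + 1))
      with ((INR N + 1) * Gamma (INR N + 1) / (t * Rpower t s)) by (field; lra).
    apply Rle_div_r; [now apply Rmult_lt_0_compat |]. lra.
  - apply is_lim_seq_const.
  - replace (Finite 0) with (Finite (K * (1 * 0))) by (f_equal; ring).
    apply (is_lim_seq_scal_l _ K (1 * 0)), (is_lim_seq_mult' _ _ 1 0).
    + apply is_lim_seq_INR_add_div. lra.
    + apply is_lim_seq_Rpower_INR_neg. lra.
Qed.

Lemma is_series_binom_coef_1 s : 0 < s < 1 -> is_series (binom_coef s) 0.
Proof.
  intros Hs.
  assert (H : is_lim_seq (sum_n (binom_coef s)) 0).
  { apply (is_lim_seq_ext (fun N => poch (1 - s) N / INR (fact N))).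
    - intros N. now rewrite sum_n_binom_coef.
    - now apply is_lim_seq_poch_div_fact. }
  exact H.
Qed.

Lemma Rabs_binom_coef_le_1 s n : -1 <= s <= 1 -> Rabs (binom_coef s n) <= 1.
Proof.
  intros Hs. induction n as [| n IH].
  - rewrite binom_coef_0, Rabs_R1. lra.
  - rewrite binom_coef_S. pose proof (pos_INR n).
    unfold Rdiv. rewrite !Rabs_mult, (Rabs_right (/ (INR n + 1))) by (left; apply Rinv_0_lt_compat; lra).
    assert (Rabs (INR n - s) * / (INR n + 1) <= 1).
    { apply (Rle_div_l _ _ (INR n + 1) ltac:(lra)). rewrite Rmult_1_l. apply Rabs_le. lra. }
    pose proof (Rabs_pos (binom_coef s n)). pose proof (Rabs_pos (INR n - s)).
    assert (0 < / (INR n + 1)) by (apply Rinv_0_lt_compat; lra).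
    nra.
Qed.

Lemma binom_coef_inside s x : -1 <= s <= 1 -> Rabs x < 1 ->
  Rbar_lt (Rabs x) (CV_radius (binom_coef s)).
Proof.
  intros Hs Hx. apply Rbar_lt_le_trans with 1; [exact Hx |].
  apply (proj1 (CV_radius_bounded _)). exists 1. intros n.
  rewrite pow1, Rmult_1_r. now apply Rabs_binom_coef_le_1.
Qed.

Lemma binom_coef_ode s x : -1 <= s <= 1 -> Rabs x < 1 ->
  (1 - x) * PSeries (PS_derive (binom_coef s)) x = - s * PSeries (binom_coef s) x.
Proof.
  intros Hs Hx. pose proof (binom_coef_inside s x Hs Hx) as Hr.
  assert (Hr' : Rbar_lt (Rabs x) (CV_radius (PS_derive (binom_coef s))))
    by now rewrite CV_radius_derive.
  pose proof (proj1 (is_pseries_R _ _ _) (PSeries_correct _ _ (CV_radius_inside _ _ Hr))) as F.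
  pose proof (proj1 (is_pseries_R _ _ _) (PSeries_correct _ _ (CV_radius_inside _ _ Hr'))) as D.
  set (f := PSeries (binom_coef s) x) in *. set (d := PSeries (PS_derive (binom_coef s)) x) in *.
  (* [sum n a_n x^n] is [d + s f] since [(n + 1) a_(n+1) = (n - s) a_n], and [x d] by a shift. *)
  assert (E1 : is_series (fun n => INR n * binom_coef s n * x ^ n) (d + s * f)).
  { eapply is_series_ext; [| exact (is_series_plus _ _ _ _ D (is_series_scal_l s _ _ F))].
    intros n. unfold PS_derive. rewrite binom_coef_S, S_INR.
    unfold plus, scal; simpl; unfold mult; simpl. pose proof (pos_INR n). field. lra. }
  assert (E2 : is_series (fun n => INR n * binom_coef s n * x ^ n) (x * d)).
  { apply is_series_decr_1.
    match goal with |- is_series _ ?l => replace l with (x * d) by (unfold plus, opp; simpl; ring) end.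
    eapply is_series_ext; [| exact (is_series_scal_l x _ _ D)].
    intros n. unfold PS_derive. rewrite S_INR. unfold scal; simpl; unfold mult; simpl. ring. }
  assert (U := is_series_unique _ _ E1). rewrite (is_series_unique _ _ E2) in U. lra.
Qed.

Lemma is_series_binom_coef s w : -1 <= s <= 1 -> -1 < w < 1 ->
  is_series (fun n => binom_coef s n * w ^ n) (Rpower (1 - w) s).
Proof.
  intros Hs Hw.
  set (g := fun x => PSeries (binom_coef s) x * Rpower (1 - x) (- s)).
  assert (Hd : forall x, -1 < x < 1 -> derivable_pt_lim g x 0).
  { intros x Hx. apply is_derive_Reals.
    assert (Hx1 : Rabs x < 1) by (apply Rabs_def1; lra).
    assert (HR : is_derive (fun x => Rpower (1 - x) (- s)) x (s * Rpower (1 - x) (- s) / (1 - x))).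
    { unfold Rpower. auto_derive; [lra |]. replace (1 + - x) with (1 - x) by ring. field. lra. }
    pose proof (is_derive_mult _ _ _ _ _ (is_derive_PSeries _ _ (binom_coef_inside s x Hs Hx1)) HR
                  Rmult_comm) as HG.
    match type of HG with is_derive _ _ ?l => replace 0 with l; [exact HG |] end.
    pose proof (binom_coef_ode s x Hs Hx1) as Hode.
    unfold plus, mult; simpl.
    replace (PSeries (PS_derive (binom_coef s)) x) with (- s * PSeries (binom_coef s) x / (1 - x))
      by (rewrite <- Hode; field; lra).
    field. lra. }
  assert (Hconst : g w = g 0).
  { destruct (Rtotal_order w 0) as [Hlt | [-> | Hgt]]; [| reflexivity |].
    - destruct (MVT_cor2 g (fun _ => 0) w 0 Hlt) as [c [Hc _]]; [intros; apply Hd; lra | lra].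
    - destruct (MVT_cor2 g (fun _ => 0) 0 w Hgt) as [c [Hc _]]; [intros; apply Hd; lra | lra]. }
  assert (Hg0 : g 0 = 1).
  { unfold g. rewrite PSeries_0, binom_coef_0, Rminus_0_r.
    unfold Rpower. rewrite ln_1, Rmult_0_r, exp_0. ring. }
  assert (Hw1 : Rabs w < 1) by (apply Rabs_def1; lra).
  pose proof (PSeries_correct _ _ (CV_radius_inside _ _ (binom_coef_inside s w Hs Hw1))) as F.
  apply is_pseries_R in F.
  replace (Rpower (1 - w) s) with (PSeries (binom_coef s) w); [exact F |].
  rewrite Hg0 in Hconst. unfold g in Hconst. rewrite Rpower_Ropp in Hconst.
  assert (0 < Rpower (1 - w) s) by apply exp_pos.
  apply (Rmult_eq_reg_r (/ Rpower (1 - w) s)); [rewrite Hconst; field; lra |].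
  apply Rinv_neq_0_compat. lra.
Qed.

Lemma is_series_ge_term (u : nat -> R) (l : R) k : is_series u l -> (forall n, 0 <= u n) -> u k <= l.
Proof.
  intros Hu Hpos.
  assert (Hmono : forall N m, sum_n u N <= sum_n u (m + N)).
  { intros N m. induction m as [| m IH]; simpl; [lra |].
    rewrite sum_Sn. unfold plus; simpl. specialize (Hpos (S (m + N))). lra. }
  assert (Hk : u k <= sum_n u k).
  { destruct k as [| k]; [rewrite sum_O; lra |].
    rewrite sum_Sn. unfold plus; simpl. pose proof (Hmono 0%nat k) as H.
    rewrite sum_O, Nat.add_0_r in H. specialize (Hpos 0%nat). lra. }
  apply Rle_trans with (sum_n u k); [exact Hk |].
  assert (Hlim : is_lim_seq (fun m => sum_n u (m + k)) l) by now apply is_lim_seq_incr_n.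
  exact (is_lim_seq_le (fun _ => sum_n u k) _ _ _ (fun m => Hmono k m) (is_lim_seq_const _) Hlim).
Qed.

Lemma is_series_shift (u : nat -> R) (l : R) : is_series u l -> is_series (fun n => u (S n)) (l - u 0%nat).
Proof.
  intros H. apply is_series_incr_1. unfold plus; simpl.
  now replace (l - u 0%nat + u 0%nat) with l by ring.
Qed.

Lemma is_series_ext_eq (u v : nat -> R) (l l' : R) :
  (forall n, u n = v n) -> l = l' -> is_series u l -> is_series v l'.
Proof. intros Huv <- Hu. exact (is_series_ext _ _ _ Huv Hu). Qed.

Lemma hyp_coef_S_le a b c d n : 0 < a -> 0 < b -> 0 < c <= d ->
  hyp_coef a b d (S n) <= c / d * hyp_coef a b c (S n).
Proof.
  intros Ha Hb Hcd. unfold hyp_coef.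
  change (poch c (S n)) with (poch c n * (c + INR n)).
  change (poch d (S n)) with (poch d n * (d + INR n)).
  rewrite <- (poch_add1 c n), <- (poch_add1 d n).
  pose proof (poch_le (c + 1) (d + 1) n ltac:(lra)).
  pose proof (poch_pos (c + 1) n ltac:(lra)). pose proof (INR_fact_lt_0 (S n)).
  assert (0 < poch a (S n) * poch b (S n)) by (apply Rmult_lt_0_compat; apply poch_pos; easy).
  set (N := poch a (S n) * poch b (S n)) in *. set (F := INR (fact (S n))) in *.
  replace (c / d * (N / (c * poch (c + 1) n * F))) with (N / (d * poch (c + 1) n * F))
    by (field; repeat split; lra).
  apply Rmult_le_compat_l; [lra |]. apply Rinv_le_contravar.
  - repeat apply Rmult_lt_0_compat; lra.
  - apply Rmult_le_compat_r; [lra |]. apply Rmult_le_compat_l; lra.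
Qed.

Lemma hyp_coef_contiguous_sum_n a b c N : 0 < c ->
  c * (c - a - b) * sum_n (hyp_coef a b c) N - (c - a) * (c - b) * sum_n (hyp_coef a b (c + 1)) N
  = - c * (INR N + 1) * hyp_coef a b c (S N).
Proof.
  intros Hc. induction N as [| N IH].
  - rewrite !sum_O, hyp_coef_S, !hyp_coef_0 by easy. simpl. field. lra.
  - rewrite (sum_Sn (hyp_coef a b c)), (sum_Sn (hyp_coef a b (c + 1))).
    rewrite (hyp_coef_add1 a b c (S N)), (hyp_coef_S a b c (S N)), !S_INR by easy.
    unfold plus; simpl.
    transitivity (- c * (INR N + 1) * hyp_coef a b c (S N)
                  + (c * (c - a - b) * hyp_coef a b c (S N)
                     - (c - a) * (c - b) * (hyp_coef a b c (S N) * c / (c + (INR N + 1)))));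
      [rewrite <- IH; ring |].
    pose proof (pos_INR N). field. lra.
Qed.

Lemma hyp_coef_contiguous a b c S1 S2 : 0 < c ->
  is_series (hyp_coef a b c) S1 -> is_series (hyp_coef a b (c + 1)) S2 ->
  is_lim_seq (fun N => (INR N + 1) * hyp_coef a b c (S N)) 0 ->
  c * (c - a - b) * S1 = (c - a) * (c - b) * S2.
Proof.
  intros Hc H1 H2 H3.
  assert (L1 : is_lim_seq (fun N => c * (c - a - b) * sum_n (hyp_coef a b c) N
                 - (c - a) * (c - b) * sum_n (hyp_coef a b (c + 1)) N)
                 (c * (c - a - b) * S1 - (c - a) * (c - b) * S2)).
  { apply is_lim_seq_minus'.
    - exact (is_lim_seq_scal_l _ (c * (c - a - b)) S1 H1).
    - exact (is_lim_seq_scal_l _ ((c - a) * (c - b)) S2 H2). }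
  assert (L2 : is_lim_seq (fun N => c * (c - a - b) * sum_n (hyp_coef a b c) N
                 - (c - a) * (c - b) * sum_n (hyp_coef a b (c + 1)) N) (- c * 0)).
  { apply (is_lim_seq_ext (fun N => - c * ((INR N + 1) * hyp_coef a b c (S N)))).
    - intros N. rewrite hyp_coef_contiguous_sum_n by easy. ring.
    - exact (is_lim_seq_scal_l _ (- c) 0 H3). }
  pose proof (is_lim_seq_unique _ _ L1) as U. rewrite (is_lim_seq_unique _ _ L2) in U.
  injection U. lra.
Qed.

Section Gauss_summation.

Variables a b c : R.
Hypotheses (Ha : 0 < a) (Hb : 0 < b) (Hc_gt : a + b < c) (Hc_lt : c < a + b + 1).

Definition coef_ratio (n : nat) : R := hyp_coef a b c (S n) / - binom_coef (c - a - b) (S n).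

Lemma coef_ratio_Gamma n : coef_ratio n = Q_abc a b c *
  (Gamma (INR n + (a + 1)) * Gamma (INR n + (b + 1)) /
   (Gamma (INR n + (c + 1)) * Gamma (INR n + (1 - (c - a - b))))).
Proof.
  unfold coef_ratio, Q_abc, hyp_coef. rewrite opp_binom_coef_S.
  pose proof (pos_INR n).
  rewrite !(poch_Gamma _ (S n)), (poch_Gamma (1 - (c - a - b))), S_INR by lra.
  replace (a + (INR n + 1)) with (INR n + (a + 1)) by ring.
  replace (b + (INR n + 1)) with (INR n + (b + 1)) by ring.
  replace (c + (INR n + 1)) with (INR n + (c + 1)) by ring.
  replace (1 - (c - a - b) + INR n) with (INR n + (1 - (c - a - b))) by ring.
  replace (a + b + 1 - c) with (1 - (c - a - b)) by ring.
  pose proof (Gamma_pos a Ha). pose proof (Gamma_pos b Hb). pose proof (Gamma_pos c ltac:(lra)).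
  pose proof (Gamma_pos (1 - (c - a - b)) ltac:(lra)).
  pose proof (Gamma_pos (INR n + (a + 1)) ltac:(lra)).
  pose proof (Gamma_pos (INR n + (b + 1)) ltac:(lra)).
  pose proof (Gamma_pos (INR n + (c + 1)) ltac:(lra)).
  pose proof (Gamma_pos (INR n + (1 - (c - a - b))) ltac:(lra)).
  pose proof (INR_fact_lt_0 (S n)).
  field. repeat split; lra.
Qed.

Lemma is_lim_seq_coef_ratio : is_lim_seq coef_ratio (Q_abc a b c).
Proof.
  pose proof (is_lim_seq_scal_l _ (Q_abc a b c) _
    (is_lim_seq_Gamma_ratio (a + 1) (b + 1) (c + 1) (1 - (c - a - b))
       ltac:(lra) ltac:(lra) ltac:(lra) ltac:(lra) ltac:(ring))) as H.
  simpl in H. rewrite Rmult_1_r in H.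
  eapply is_lim_seq_ext; [| exact H]. intros n. now rewrite coef_ratio_Gamma.
Qed.

Lemma coef_ratio_pos n : 0 < coef_ratio n.
Proof.
  apply Rdiv_lt_0_compat; [apply hyp_coef_pos; lra |].
  pose proof (binom_coef_S_neg (c - a - b) n ltac:(lra)). lra.
Qed.

(* The ratio of consecutive values is [(a + m) (b + m) / ((c + m) (m - (c - a - b)))] with
   [m = n + 1], whose numerator exceeds its denominator by [a b + c (c - a - b) > 0]. *)
Lemma coef_ratio_lt_S n : coef_ratio n < coef_ratio (S n).
Proof.
  pose proof (coef_ratio_pos n) as Hr. pose proof (binom_coef_S_neg (c - a - b) n ltac:(lra)).
  assert (E : coef_ratio (S n) = coef_ratio n *
    ((a + INR (S n)) * (b + INR (S n)) / ((c + INR (S n)) * (INR (S n) - (c - a - b))))).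
  { unfold coef_ratio. rewrite (hyp_coef_S a b c (S n)), (binom_coef_S _ (S n)) by lra.
    rewrite S_INR. pose proof (pos_INR n). field. repeat split; lra. }
  rewrite E. set (m := INR (S n)).
  assert (Hm : 1 <= m) by (unfold m; rewrite S_INR; pose proof (pos_INR n); lra).
  rewrite <- (Rmult_1_r (coef_ratio n)) at 1. apply Rmult_lt_compat_l; [easy |].
  assert (Hd : 0 < (c + m) * (m - (c - a - b))) by (apply Rmult_lt_0_compat; lra).
  apply (Rlt_div_r _ _ _ Hd).
  assert (0 < a * b) by now apply Rmult_lt_0_compat.
  assert (0 < c * (c - a - b)) by (apply Rmult_lt_0_compat; lra).
  nra.
Qed.

Lemma coef_ratio_le n m : (n <= m)%nat -> coef_ratio n <= coef_ratio m.
Proof.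
  induction 1 as [| m _ IH]; [lra |]. pose proof (coef_ratio_lt_S m). lra.
Qed.

Lemma coef_ratio_lt_Q n : coef_ratio n < Q_abc a b c.
Proof.
  apply Rlt_le_trans with (coef_ratio (S n)); [apply coef_ratio_lt_S |].
  assert (H : is_lim_seq (fun m => coef_ratio (m + S n)) (Q_abc a b c))
    by now apply is_lim_seq_incr_n, is_lim_seq_coef_ratio.
  exact (is_lim_seq_le (fun _ => coef_ratio (S n)) _ _ _
           (fun m => coef_ratio_le (S n) (m + S n) ltac:(lia)) (is_lim_seq_const _) H).
Qed.

Lemma hyp_coef_S_lt n : hyp_coef a b c (S n) < Q_abc a b c * - binom_coef (c - a - b) (S n).
Proof.
  pose proof (coef_ratio_lt_Q n) as H. pose proof (binom_coef_S_neg (c - a - b) n ltac:(lra)).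
  assert (Hd : - binom_coef (c - a - b) (S n) > 0) by lra.
  unfold coef_ratio in H. now apply (Rlt_div_l _ _ _ Hd) in H.
Qed.


Lemma ex_series_hyp_coef : ex_series (hyp_coef a b c).
Proof.
  apply ex_series_incr_1.
  apply (ex_series_le (V := R_CompleteNormedModule) _
           (fun n => - Q_abc a b c * binom_coef (c - a - b) (S n))).
  - intros n. unfold norm; simpl; unfold abs; simpl.
    rewrite Rabs_right by (left; apply hyp_coef_pos; lra).
    left. replace (- Q_abc a b c * binom_coef (c - a - b) (S n))
      with (Q_abc a b c * - binom_coef (c - a - b) (S n)) by ring.
    apply hyp_coef_S_lt.
  - eexists. exact (is_series_scal_l (- Q_abc a b c) _ _
      (is_series_shift _ _ (is_series_binom_coef_1 (c - a - b) ltac:(lra)))).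
Qed.

Lemma ex_series_hyp_coef_add k : ex_series (hyp_coef a b (c + INR k)).
Proof.
  pose proof (pos_INR k).
  apply (ex_series_le (V := R_CompleteNormedModule) _ (hyp_coef a b c)); [| exact ex_series_hyp_coef].
  intros n. unfold norm; simpl; unfold abs; simpl.
  rewrite Rabs_right by (left; apply hyp_coef_pos; lra). apply hyp_coef_le; lra.
Qed.

Lemma is_lim_seq_hyp_coef_add_S k :
  is_lim_seq (fun N => (INR N + 1) * hyp_coef a b (c + INR k) (S N)) 0.
Proof.
  pose proof (pos_INR k). set (s := c - a - b).
  apply is_lim_seq_le_le with (u := fun _ => 0)
    (w := fun N => Q_abc a b c * s * (poch (1 - s) N / INR (fact N))).
  - intros N. pose proof (pos_INR N). split.
    { left. apply Rmult_lt_0_compat; [lra | apply hyp_coef_pos; lra]. }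
    apply Rle_trans with ((INR N + 1) * hyp_coef a b c (S N)).
    { apply Rmult_le_compat_l; [lra | apply hyp_coef_le; lra]. }
    apply Rle_trans with ((INR N + 1) * (Q_abc a b c * - binom_coef s (S N))).
    { apply Rmult_le_compat_l; [lra | left; apply hyp_coef_S_lt]. }
    rewrite opp_binom_coef_S, INR_fact_S. right. pose proof (INR_fact_lt_0 N). field. lra.
  - apply is_lim_seq_const.
  - replace (Finite 0) with (Finite (Q_abc a b c * s * 0)) by (f_equal; ring).
    exact (is_lim_seq_scal_l _ _ 0 (is_lim_seq_poch_div_fact s ltac:(unfold s; lra))).
Qed.

Lemma Series_hyp_coef_add_S k :
  (c + INR k) * (c + INR k - a - b) * Series (hyp_coef a b (c + INR k)) =
  (c + INR k - a) * (c + INR k - b) * Series (hyp_coef a b (c + INR (S k))).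
Proof.
  pose proof (pos_INR k).
  assert (E : c + INR (S k) = c + INR k + 1) by (rewrite S_INR; ring).
  pose proof (Series_correct _ (ex_series_hyp_coef_add (S k))) as H1. rewrite E in H1 |- *.
  exact (hyp_coef_contiguous a b (c + INR k) _ _ ltac:(lra)
           (Series_correct _ (ex_series_hyp_coef_add k)) H1 (is_lim_seq_hyp_coef_add_S k)).
Qed.


Lemma Series_hyp_coef_iter k : Series (hyp_coef a b c) =
  poch (c - a) k * poch (c - b) k / (poch c k * poch (c - a - b) k) *
  Series (hyp_coef a b (c + INR k)).
Proof.
  induction k as [| k IH].
  - simpl. rewrite Rplus_0_r. field.
  - rewrite IH. pose proof (pos_INR k) as Hk.
    pose proof (poch_pos c k ltac:(lra)) as Pc. pose proof (poch_pos (c - a - b) k ltac:(lra)) as Ps.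
    pose proof (Series_hyp_coef_add_S k) as H.
    assert (H' : Series (hyp_coef a b (c + INR k)) =
      (c + INR k - a) * (c + INR k - b) / ((c + INR k) * (c + INR k - a - b)) *
      Series (hyp_coef a b (c + INR (S k)))).
    { apply (Rmult_eq_reg_l ((c + INR k) * (c + INR k - a - b)));
        [rewrite H; field; lra | apply Rmult_integral_contrapositive; lra]. }
    rewrite H'. cbn [poch]. field. repeat split; lra.
Qed.

Lemma is_lim_seq_poch_ratio : is_lim_seq
  (fun k => poch (c - a) k * poch (c - b) k / (poch c k * poch (c - a - b) k)) (P_abc a b c).
Proof.
  pose proof (is_lim_seq_scal_l _ (P_abc a b c) _
    (is_lim_seq_Gamma_ratio (c - a) (c - b) c (c - a - b)
       ltac:(lra) ltac:(lra) ltac:(lra) ltac:(lra) ltac:(ring))) as H.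
  simpl in H. rewrite Rmult_1_r in H.
  eapply is_lim_seq_ext; [| exact H]. intros k. unfold P_abc.
  pose proof (pos_INR k).
  rewrite !poch_Gamma by lra.
  rewrite !(Rplus_comm _ (INR k)).
  pose proof (Gamma_pos (c - a) ltac:(lra)). pose proof (Gamma_pos (c - b) ltac:(lra)).
  pose proof (Gamma_pos c ltac:(lra)). pose proof (Gamma_pos (c - a - b) ltac:(lra)).
  pose proof (Gamma_pos (INR k + (c - a)) ltac:(lra)).
  pose proof (Gamma_pos (INR k + (c - b)) ltac:(lra)).
  pose proof (Gamma_pos (INR k + c) ltac:(lra)).
  pose proof (Gamma_pos (INR k + (c - a - b)) ltac:(lra)).
  field. repeat split; lra.
Qed.

Lemma is_lim_seq_Series_hyp_coef_add : is_lim_seq (fun k => Series (hyp_coef a b (c + INR k))) 1.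
Proof.
  set (S0 := Series (fun n => hyp_coef a b c (S n))).
  assert (Htail : forall k, ex_series (fun n => hyp_coef a b (c + INR k) (S n)))
    by (intros k; exact (proj1 (ex_series_incr_1 _) (ex_series_hyp_coef_add k))).
  apply is_lim_seq_le_le with (u := fun _ => 1) (w := fun k => 1 + S0 * (c * / (INR k + c))).
  - intros k. pose proof (pos_INR k). assert (Hck : 0 < c + INR k) by lra.
    rewrite Series_incr_1, hyp_coef_0 by apply ex_series_hyp_coef_add. split.
    + pose proof (is_series_ge_term _ _ 0%nat (Series_correct _ (Htail k))
                    (fun n => Rlt_le _ _ (hyp_coef_pos a b _ (S n) Ha Hb Hck))).
      pose proof (hyp_coef_pos a b (c + INR k) 1 Ha Hb Hck). lra.
    + apply Rplus_le_compat_l.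
      apply Rle_trans with (Series (fun n => c / (c + INR k) * hyp_coef a b c (S n))).
      * apply Series_le.
        -- intros n. split; [left; apply hyp_coef_pos; lra | apply hyp_coef_S_le; lra].
        -- apply (ex_series_scal_l (V := R_NormedModule)).
           exact (proj1 (ex_series_incr_1 _) ex_series_hyp_coef).
      * rewrite Series_scal_l. fold S0. right. rewrite (Rplus_comm (INR k)). unfold Rdiv. ring.
  - apply is_lim_seq_const.
  - replace (Finite 1) with (Finite (1 + S0 * (c * 0))) by (f_equal; ring).
    apply is_lim_seq_plus'; [apply is_lim_seq_const |].
    exact (is_lim_seq_scal_l _ S0 (c * 0)
             (is_lim_seq_scal_l _ c 0 (is_lim_seq_inv_INR_add c ltac:(lra)))).
Qed.

Theorem is_series_hyp_coef_Gauss : is_series (hyp_coef a b c) (P_abc a b c).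
Proof.
  replace (P_abc a b c) with (Series (hyp_coef a b c)); [exact (Series_correct _ ex_series_hyp_coef) |].
  pose proof (is_lim_seq_mult' _ _ _ _ is_lim_seq_poch_ratio is_lim_seq_Series_hyp_coef_add) as H.
  rewrite Rmult_1_r in H.
  apply is_lim_seq_unique in H. rewrite (Lim_seq_ext _ (fun _ => Series (hyp_coef a b c))) in H.
  - rewrite Lim_seq_const in H. now injection H.
  - intros k. now rewrite <- Series_hyp_coef_iter.
Qed.

Lemma is_series_hyp2F1 w : 0 <= w <= 1 ->
  is_series (fun n => hyp_coef a b c n * w ^ n) (hyp2F1 a b c w).
Proof.
  intros Hw. apply Series_correct, (ex_series_le (V := R_CompleteNormedModule) _ (hyp_coef a b c));
    [| exact ex_series_hyp_coef].
  intros n. unfold norm; simpl; unfold abs; simpl.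
  pose proof (hyp_coef_pos a b c n Ha Hb ltac:(lra)). pose proof (pow_le w n (proj1 Hw)).
  pose proof (pow_incr w 1 n Hw). rewrite pow1 in *.
  rewrite Rabs_mult, !Rabs_right by lra. nra.
Qed.

End Gauss_summation.

Lemma pow_lt_decr w i j : 0 < w < 1 -> (i < j)%nat -> w ^ j < w ^ i.
Proof.
  intros Hw Hij. replace j with (i + (j - i))%nat by lia. rewrite pow_add.
  pose proof (pow_lt w i (proj1 Hw)).
  pose proof (pow_lt_1_compat w (j - i) ltac:(lra) ltac:(lia)). nra.
Qed.

Lemma pow_le_decr w i j : 0 < w < 1 -> (i <= j)%nat -> w ^ j <= w ^ i.
Proof.
  intros Hw Hij. destruct (Nat.eq_dec i j) as [-> | Hne]; [lra |].
  left. apply pow_lt_decr; [easy | lia].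
Qed.

Lemma is_series_0_pos_term (u : nat -> R) k : is_series u 0 -> u k < 0 -> exists n, 0 < u n.
Proof.
  intros Hu Hk. destruct (classic (exists n, 0 < u n)) as [H | H]; [exact H | exfalso].
  assert (Hneg : forall n, 0 <= -1 * u n)
    by (intros n; enough (u n <= 0) by lra; apply Rnot_lt_le; intros Hn; apply H; now exists n).
  pose proof (is_series_ge_term _ _ k (is_series_scal_l (-1) _ _ Hu) Hneg) as H'.
  unfold scal in H'; simpl in H'; unfold mult in H'; simpl in H'. lra.
Qed.

Lemma first_crossing (r : nat -> R) (t : R) :
  (forall i j, (i <= j)%nat -> r i <= r j) -> (exists n, t < r n) ->
  exists m, (forall k, (k < m)%nat -> r k <= t) /\ (forall k, (m <= k)%nat -> t < r k).
Proof.
  intros Hmono [n Hn]. induction n as [| n IH].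
  - exists 0%nat. split; [intros; lia |].
    intros k _. pose proof (Hmono 0%nat k ltac:(lia)). lra.
  - destruct (Rlt_le_dec t (r n)) as [Hlt | Hle]; [now apply IH |].
    exists (S n). split.
    + intros k Hk. pose proof (Hmono k n ltac:(lia)). lra.
    + intros k Hk. pose proof (Hmono (S n) k Hk). lra.
Qed.

Section Series_comparison.

Variables (A alpha : nat -> R) (P F Y w : R).
Hypotheses (Hw : 0 < w < 1) (HA0 : A 0%nat = 1) (Halpha0 : alpha 0%nat = 1)
  (Halpha_neg : forall n, alpha (S n) < 0)
  (HP : is_series A P) (HF : is_series (fun n => A n * w ^ n) F)
  (Halpha : is_series alpha 0) (HY : is_series (fun n => alpha n * w ^ n) Y).

Lemma series_comparison_upper Q :
  (forall n, A (S n) < Q * - alpha (S n)) -> P - F < Q * Y.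
Proof.
  intros HAQ.
  assert (HT : is_series (fun n => (1 - w ^ n) * (- Q * alpha n - A n)) (Q * Y - (P - F))).
  { pose proof (is_series_plus _ _ _ _ (is_series_scal_l (- Q) _ _ Halpha) (is_series_opp _ _ HP)) as H1.
    pose proof (is_series_plus _ _ _ _ (is_series_scal_l Q _ _ HY) HF) as H2.
    refine (is_series_ext_eq _ _ _ _ _ _ (is_series_plus _ _ _ _ H1 H2));
      [intros n |]; unfold plus, opp, scal; simpl; unfold mult; simpl; ring. }
  assert (Hterm : forall n, 0 < (1 - w ^ S n) * (- Q * alpha (S n) - A (S n))).
  { intros n. pose proof (pow_lt_decr w 0 (S n) Hw ltac:(lia)). specialize (HAQ n). simpl in *.
    apply Rmult_lt_0_compat; lra. }
  pose proof (is_series_ge_term _ _ 1 HT) as H.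
  assert (0 < Q * Y - (P - F)); [| lra].
  apply Rlt_le_trans with ((1 - w ^ 1) * (- Q * alpha 1%nat - A 1%nat)); [apply Hterm |].
  apply H. intros [| n]; [simpl; lra | left; apply Hterm].
Qed.


Lemma series_comparison_lower :
  (forall n, A (S n) / - alpha (S n) < A (S (S n)) / - alpha (S (S n))) -> (P - 1) * Y < P - F.
Proof.
  intros Hincr.
  set (r := fun n => A (S n) / - alpha (S n)). set (t := P - 1).
  set (E := fun n => A (S n) + t * alpha (S n)).
  assert (HEr : forall n, E n = - alpha (S n) * (r n - t)).
  { intros n. unfold E, r. specialize (Halpha_neg n). field. lra. }
  assert (Hmono : forall i j, (i <= j)%nat -> r i <= r j).
  { induction 1 as [| j _ IH]; [lra |]. specialize (Hincr j). unfold r in *. lra. }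
  pose proof (is_series_shift _ _ HP) as HA1. rewrite HA0 in HA1. fold t in HA1.
  pose proof (is_series_shift _ _ Halpha) as Halpha1. rewrite Halpha0 in Halpha1.
  assert (HE : is_series E 0).
  { refine (is_series_ext_eq _ _ _ _ _ _
      (is_series_plus _ _ _ _ HA1 (is_series_scal_l t _ _ Halpha1)));
      [intros n |]; unfold plus, scal; simpl; unfold mult; simpl; unfold E; ring. }
  assert (Hcross : exists n, t < r n).
  { destruct (Rlt_le_dec t (r 1%nat)) as [H1 | H1]; [now exists 1%nat |].
    destruct (is_series_0_pos_term E 0 HE) as [n Hn].
    - rewrite HEr. specialize (Halpha_neg 0%nat). specialize (Hincr 0%nat).
      fold (r 0%nat) (r 1%nat) in Hincr. nra.
    - exists n. rewrite HEr in Hn. specialize (Halpha_neg n). nra. }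
  destruct (first_crossing r t Hmono Hcross) as [m [Hbelow Habove]].
  pose proof (is_series_shift _ _ HF) as HF1. simpl in HF1. rewrite HA0, Rmult_1_l in HF1.
  pose proof (is_series_shift _ _ HY) as HY1. simpl in HY1. rewrite Halpha0, Rmult_1_l in HY1.
  (* The weight [w ^ m - w ^ (n + 1)] has the sign of [n + 1 - m], hence the sign of [E n]. *)
  assert (HD : is_series (fun n => E n * (w ^ m - w ^ S n)) (P - F - t * Y)).
  { refine (is_series_ext_eq _ _ _ _ _ _ (is_series_plus _ _ _ _
      (is_series_scal_l (w ^ m) _ _ HE)
      (is_series_opp _ _ (is_series_plus _ _ _ _ HF1 (is_series_scal_l t _ _ HY1)))));
      [intros n |]; unfold plus, opp, scal; simpl; unfold mult; simpl; unfold E, t; ring. }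
  assert (Hterm : forall n, 0 <= E n * (w ^ m - w ^ S n)).
  { intros n. rewrite HEr, Rmult_assoc. specialize (Halpha_neg n).
    apply Rmult_le_pos; [lra |]. destruct (Nat.lt_ge_cases n m) as [Hn | Hn].
    - specialize (Hbelow n Hn). pose proof (pow_le_decr w (S n) m Hw Hn). nra.
    - specialize (Habove n Hn). pose proof (pow_lt_decr w m (S n) Hw ltac:(lia)). nra. }
  pose proof (is_series_ge_term _ _ m HD Hterm) as Hm.
  assert (0 < E m * (w ^ m - w ^ S m)); [| lra].
  rewrite HEr. specialize (Halpha_neg m). specialize (Habove m (le_n m)).
  pose proof (pow_lt_decr w m (S m) Hw (Nat.lt_succ_diag_r m)).
  apply Rmult_lt_0_compat; [| lra]. apply Rmult_lt_0_compat; lra.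
Qed.

End Series_comparison.

Theorem lemma5p2 (a b c w : R) :
  0 < a -> 0 < b -> a + b < c -> c < a + b + 1 -> 0 < w < 1 ->
  0 < P_abc a b c - 1 /\
  P_abc a b c - 1 < (P_abc a b c - hyp2F1 a b c w) / Rpower (1 - w) (c - a - b) /\
  (P_abc a b c - hyp2F1 a b c w) / Rpower (1 - w) (c - a - b) < Q_abc a b c.
Proof.
  intros Ha Hb Hc_gt Hc_lt Hw.
  pose proof (is_series_hyp_coef_Gauss a b c Ha Hb Hc_gt Hc_lt) as HP.
  pose proof (is_series_hyp2F1 a b c Ha Hb Hc_gt Hc_lt w ltac:(lra)) as HF.
  pose proof (is_series_binom_coef (c - a - b) w ltac:(lra) ltac:(lra)) as HY.
  pose proof (is_series_binom_coef_1 (c - a - b) ltac:(lra)) as Halpha.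
  assert (HY_pos : 0 < Rpower (1 - w) (c - a - b)) by apply exp_pos.
  pose proof (fun n => binom_coef_S_neg (c - a - b) n ltac:(lra)) as Halpha_neg.
  split; [| split].
  - pose proof (is_series_shift _ _ HP) as HP1. rewrite hyp_coef_0 in HP1.
    apply Rlt_le_trans with (hyp_coef a b c 1); [apply hyp_coef_pos; lra |].
    apply (is_series_ge_term _ _ 0 HP1). intros n. left. apply hyp_coef_pos; lra.
  - apply (Rlt_div_r _ _ _ HY_pos).
    apply (series_comparison_lower _ _ _ _ _ _ Hw (hyp_coef_0 a b c) (binom_coef_0 _) Halpha_neg
             HP HF Halpha HY).
    exact (coef_ratio_lt_S a b c Ha Hb Hc_gt Hc_lt).
  - apply (Rlt_div_l _ _ _ HY_pos).
    exact (series_comparison_upper _ _ _ _ _ _ Hw HP HF Halpha HY _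
             (hyp_coef_S_lt a b c Ha Hb Hc_gt Hc_lt)).
Qed.
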